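(* Let $\zeta_5=e^{2\pi i/5}$, let $A=\theta[1;\tfrac15]$ and $B=\theta[1;\tfrac35]$ (theta constants, functions of $\tau$), and for $k\in\{1,3,5,7,9\}$ let $f_k=\theta[\tfrac15;\tfrac k5](\zeta,\tau)$. Then for every $(\zeta,\tau)\in\mathbb{C}\times\mathbb{H}^2$: $$B^2f_1f_9-A^2f_3f_7+ABf_5^2=0,$$ $$\zeta_5^2A^2f_3f_9-\zeta_5^2B^2f_5f_7+ABf_1^2=0,$$ $$B^2f_1f_3+\zeta_5^2A^2f_5f_9-\zeta_5^2ABf_7^2=0,$$ $$A^2f_1f_5+\zeta_5^2B^2f_7f_9-ABf_3^2=0,$$ $$A^2f_1f_7-B^2f_3f_5+\zeta_5^2ABf_9^2=0.$$
   Context: Let $\mathbb{H}^2=\{\tau\in\mathbb{C}:\Im\tau>0\}$. For $(\epsilon,\epsilon')\in\mathbb{R}^2$, $$\theta[\epsilon;\epsilon'](\zeta,\tau)=\sum_{n\in\mathbb{Z}}\exp\Big(2\pi i\Big[\tfrac12\big(n+\tfrac{\epsilon}{2}\big)^2\tau+\big(n+\tfrac{\epsilon}{2}\big)\big(\zeta+\tfrac{\epsilon'}{2}\big)\Big]\Big),$$ and $\theta[\epsilon;\epsilon']=\theta[\epsilon;\epsilon'](0,\tau)$ denotes the theta constant. *)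

From Stdlib Require Import Reals ZArith.
From Coquelicot Require Import Coquelicot.
Open Scope R_scope.

Definition cexp (z : C) : C :=
  (exp (Re z) * cos (Im z), exp (Re z) * sin (Im z)).

(* For the theta series the
   family is absolutely summable when Im tau > 0, so this is the usual value. *)
Definition Zsum (f : Z -> C) : C :=
  (Series (fun m => Re (f (Z.of_nat m))) + Series (fun m => Re (f (- Z.of_nat m - 1)%Z)),
   Series (fun m => Im (f (Z.of_nat m))) + Series (fun m => Im (f (- Z.of_nat m - 1)%Z))).

Definition theta_term (eps eps' : R) (zeta tau : C) (n : Z) : C :=
  let a : C := RtoC (IZR n + eps / 2) in
  cexp (Cmult (Cmult (RtoC (2 * PI)) Ci)
          (Cplus (Cmult (Cmult (RtoC (1/2)) (Cmult a a)) tau)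
                 (Cmult a (Cplus zeta (RtoC (eps' / 2)))))).

Definition theta (eps eps' : R) (zeta tau : C) : C :=
  Zsum (theta_term eps eps' zeta tau).

Definition theta_const (eps eps' : R) (tau : C) : C := theta eps eps' (RtoC 0) tau.

Definition zeta5 : C := cexp (Cmult (RtoC (2 * PI / 5)) Ci).

(* Expand each product of two theta constants and two theta functions as a sum over
   [(n1, n2, m1, m2)] in Z^4 and change variables to [t = m1 + m2, d = m1 - m2,
   P = n1 + n2 + 1, D = n1 - n2]. The Gaussian part of a term then depends only on [t] and
   [d^2 + P^2 + D^2], so it is invariant under the 48 signed permutations of [(d, P, D)], while
   the characteristics contribute a tenth root of unity depending only on the point mod 10.
   Averaging over these symmetries, the coefficient of each Gaussian factor vanishes: a finite
   check over (Z/10)^4 reduces it to [w^4 - w^3 + w^2 - w + 1 = 0] for [w = e^(2 pi i / 10)].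
   To make this rigorous the sums are truncated to boxes; the box sums converge to the products
   of theta series, and the part lying outside the symmetric cube is exponentially small. *)

From Stdlib Require Import Reals Lra Lia ZArith List Permutation.
From Coquelicot Require Import Coquelicot.
Import ListNotations.
Open Scope R_scope.

Fixpoint csum {A} (l : list A) (F : A -> C) : C :=
  match l with nil => 0%C | x :: l' => (F x + csum l' F)%C end.

Fixpoint rsum {A} (l : list A) (F : A -> R) : R :=
  match l with nil => 0 | x :: l' => F x + rsum l' F end.

Lemma csum_app {A} (l1 l2 : list A) F : csum (l1 ++ l2) F = (csum l1 F + csum l2 F)%C.
Proof. induction l1 as [|x l1 IH]; simpl; [ring|rewrite IH; ring]. Qed.

Lemma rsum_app {A} (l1 l2 : list A) F : rsum (l1 ++ l2) F = rsum l1 F + rsum l2 F.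
Proof. induction l1 as [|x l1 IH]; simpl; [ring|rewrite IH; ring]. Qed.

Lemma csum_ext {A} (l : list A) F G : (forall x, In x l -> F x = G x) -> csum l F = csum l G.
Proof. induction l; simpl; intros H; auto. rewrite H, IHl; auto. Qed.

Lemma rsum_ext {A} (l : list A) F G : (forall x, In x l -> F x = G x) -> rsum l F = rsum l G.
Proof. induction l; simpl; intros H; auto. rewrite H, IHl; auto. Qed.

Lemma csum_perm {A} (l1 l2 : list A) F : Permutation l1 l2 -> csum l1 F = csum l2 F.
Proof. induction 1; simpl; try congruence. ring. Qed.

Lemma csum_map {A B} (g : A -> B) l F : csum (map g l) F = csum l (fun x => F (g x)).
Proof. induction l; simpl; congruence. Qed.

Lemma rsum_map {A B} (g : A -> B) l F : rsum (map g l) F = rsum l (fun x => F (g x)).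
Proof. induction l; simpl; congruence. Qed.

Lemma csum_flat_map {A B} (g : A -> list B) l F :
  csum (flat_map g l) F = csum l (fun x => csum (g x) F).
Proof. induction l; simpl; auto. rewrite csum_app, IHl. auto. Qed.

Lemma csum_plus {A} (l : list A) F G : csum l (fun x => F x + G x)%C = (csum l F + csum l G)%C.
Proof. induction l; simpl; [ring|rewrite IHl; ring]. Qed.

Lemma csum_mult_l {A} (l : list A) c F : csum l (fun x => c * F x)%C = (c * csum l F)%C.
Proof. induction l; simpl; [ring|rewrite IHl; ring]. Qed.

Lemma rsum_mult_l {A} (l : list A) c F : rsum l (fun x => c * F x) = c * rsum l F.
Proof. induction l; simpl; [ring|rewrite IHl; ring]. Qed.

Lemma rsum_mult_r {A} (l : list A) c F : rsum l (fun x => F x * c) = rsum l F * c.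
Proof. induction l; simpl; [ring|rewrite IHl; ring]. Qed.

Lemma csum_eq0 {A} (l : list A) (F : A -> C) : (forall x, In x l -> F x = 0%C) -> csum l F = 0%C.
Proof. induction l; simpl; intros H; auto. rewrite H, IHl; auto. ring. Qed.

Lemma csum_filter {A} (p : A -> bool) l F :
  csum l F = (csum (filter p l) F + csum (filter (fun x => negb (p x)) l) F)%C.
Proof. induction l; simpl; [ring|destruct (p a); simpl; rewrite IHl; ring]. Qed.

Lemma csum_comm {A B} (l1 : list A) (l2 : list B) F :
  csum l1 (fun a => csum l2 (fun b => F a b)) = csum l2 (fun b => csum l1 (fun a => F a b)).
Proof.
  induction l1; simpl; [symmetry; apply csum_eq0; auto|].
  rewrite IHl1, <- csum_plus. auto.
Qed.

Lemma csum_prod_mult {A B} (l1 : list A) (l2 : list B) F G :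
  csum (list_prod l1 l2) (fun x => F (fst x) * G (snd x))%C = (csum l1 F * csum l2 G)%C.
Proof.
  induction l1 as [|a l1 IH]; cbn [csum list_prod]; [ring|].
  rewrite csum_app, csum_map, IH. cbn [fst snd]. rewrite csum_mult_l. ring.
Qed.

Lemma rsum_prod_mult {A B} (l1 : list A) (l2 : list B) F G :
  rsum (list_prod l1 l2) (fun x => F (fst x) * G (snd x)) = rsum l1 F * rsum l2 G.
Proof.
  induction l1 as [|a l1 IH]; cbn [rsum list_prod]; [ring|].
  rewrite rsum_app, rsum_map, IH. cbn [fst snd]. rewrite rsum_mult_l. ring.
Qed.

Lemma rsum_le {A} (l : list A) F G : (forall x, In x l -> F x <= G x) -> rsum l F <= rsum l G.
Proof.
  induction l; simpl; intros H; [lra|].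
  pose proof (H a (or_introl eq_refl)). assert (rsum l F <= rsum l G) by auto. lra.
Qed.

Lemma rsum_nonneg {A} (l : list A) F : (forall x, In x l -> 0 <= F x) -> 0 <= rsum l F.
Proof.
  induction l; simpl; intros H; [lra|].
  pose proof (H a (or_introl eq_refl)). assert (0 <= rsum l F) by auto. lra.
Qed.

Lemma rsum_filter_le {A} (p : A -> bool) l F : (forall x, In x l -> 0 <= F x) ->
  rsum (filter p l) F <= rsum l F.
Proof.
  induction l; simpl; intros H; [lra|].
  pose proof (H a (or_introl eq_refl)). assert (rsum (filter p l) F <= rsum l F) by auto.
  destruct (p a); simpl; lra.
Qed.

Lemma Cmod_csum {A} (l : list A) F : Cmod (csum l F) <= rsum l (fun x => Cmod (F x)).
Proof.
  induction l; simpl; [rewrite Cmod_0; lra|].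
  eapply Rle_trans; [apply Cmod_triangle|lra].
Qed.

Lemma Re_csum {A} (l : list A) F : Re (csum l F) = rsum l (fun x => Re (F x)).
Proof. induction l; simpl; auto. rewrite <- IHl. reflexivity. Qed.

Lemma Im_csum {A} (l : list A) F : Im (csum l F) = rsum l (fun x => Im (F x)).
Proof. induction l; simpl; auto. rewrite <- IHl. reflexivity. Qed.

Lemma rsum_seq g M : rsum (seq 0 (S M)) g = sum_n g M.
Proof.
  induction M; [simpl; rewrite sum_O; ring|].
  rewrite seq_S, rsum_app, IHM, sum_Sn. simpl. unfold plus; simpl. ring.
Qed.

Lemma exp_le_exp x y : x <= y -> exp x <= exp y.
Proof. intros [H|H]; [left; apply exp_increasing; auto|subst; lra]. Qed.

Lemma exp_INR_mult x m : exp (INR m * x) = exp x ^ m.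
Proof.
  induction m as [|m IH]; [simpl; rewrite Rmult_0_l; apply exp_0|].
  rewrite S_INR, Rmult_plus_distr_r, Rmult_1_l, exp_plus, IH. simpl. ring.
Qed.

Lemma im_le_Cmod c : Rabs (Im c) <= Cmod c.
Proof. eapply Rle_trans; [apply Rmax_r|apply Rmax_Cmod]. Qed.

Lemma Cmod_cexp z : Cmod (cexp z) = exp (Re z).
Proof.
  destruct z as [a b]. unfold Cmod, cexp, Re, Im; cbn [fst snd].
  replace ((exp a * cos b) ^ 2 + (exp a * sin b) ^ 2) with (Rsqr (exp a)).
  - rewrite sqrt_Rsqr; auto. left; apply exp_pos.
  - rewrite <- (Rmult_1_r (Rsqr (exp a))), <- (sin2_cos2 b). unfold Rsqr. ring.
Qed.

Lemma cexp_add x y : cexp (x + y) = (cexp x * cexp y)%C.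
Proof.
  destruct x as [a b], y as [c d]. unfold cexp, Cmult, Cplus; simpl.
  rewrite exp_plus, cos_plus, sin_plus. f_equal; ring.
Qed.

Definition e2pi (x : C) : C := cexp (RtoC (2 * PI) * Ci * x)%C.

Lemma e2pi_add x y : e2pi (x + y) = (e2pi x * e2pi y)%C.
Proof. unfold e2pi. rewrite <- cexp_add. f_equal. ring. Qed.

Lemma e2pi_real (r : R) : e2pi r = (cos (2 * PI * r), sin (2 * PI * r)).
Proof.
  unfold e2pi, cexp, RtoC, Cmult, Ci, Re, Im; cbn [fst snd].
  replace ((2 * PI * 0 - 0 * 1) * r - (2 * PI * 1 + 0 * 0) * 0) with 0 by ring.
  replace ((2 * PI * 0 - 0 * 1) * 0 + (2 * PI * 1 + 0 * 0) * r) with (2 * PI * r) by ring.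
  rewrite exp_0. f_equal; ring.
Qed.

Lemma Cmod_e2pi_real (r : R) : Cmod (e2pi r) = 1.
Proof. unfold e2pi. rewrite Cmod_cexp. simpl. replace (_ - _) with 0 by ring. apply exp_0. Qed.

Lemma e2pi_INR k : e2pi (INR k) = 1%C.
Proof.
  rewrite e2pi_real, <- (Rplus_0_l (2 * PI * INR k)).
  replace (2 * PI * INR k) with (2 * INR k * PI) by ring.
  rewrite cos_period, sin_period, cos_0, sin_0. reflexivity.
Qed.

Lemma e2pi_IZR q : e2pi (IZR q) = 1%C.
Proof.
  destruct (Z_le_gt_dec 0 q).
  - rewrite <- (Z2Nat.id q), <- INR_IZR_INZ by lia. apply e2pi_INR.
  - assert (E : e2pi (RtoC (IZR q + INR (Z.to_nat (- q)))) = 1%C).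
    { rewrite INR_IZR_INZ, Z2Nat.id, opp_IZR by lia. replace (IZR q + - IZR q) with 0 by ring.
      rewrite e2pi_real, Rmult_0_r, cos_0, sin_0. reflexivity. }
    rewrite RtoC_plus, e2pi_add, e2pi_INR, Cmult_1_r in E. exact E.
Qed.

Lemma e2pi_half : e2pi (RtoC (1 / 2)) = (-1)%C.
Proof.
  rewrite e2pi_real. replace (2 * PI * (1 / 2)) with PI by field.
  rewrite cos_PI, sin_PI. apply injective_projections; simpl; ring.
Qed.

Definition theta_majorant (zeta tau : C) : R :=
  exp ((2 * PI * Rabs (Im zeta) + 1) ^ 2 / (4 * PI * Im tau) + 1 / 2).

Lemma theta_term_e2pi eps eps' zeta tau n : theta_term eps eps' zeta tau n =
  e2pi (RtoC (1 / 2) * (RtoC (IZR n + eps / 2) * RtoC (IZR n + eps / 2)) * tau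
        + RtoC (IZR n + eps / 2) * (zeta + RtoC (eps' / 2)))%C.
Proof. reflexivity. Qed.

Lemma Cmod_theta_term_le eps eps' zeta tau n : 0 < Im tau -> Rabs eps <= 1 ->
  Cmod (theta_term eps eps' zeta tau n) <= theta_majorant zeta tau * exp (- Rabs (IZR n)).
Proof.
  intros Hy He. unfold theta_majorant. rewrite <- exp_plus.
  set (y := Im tau) in *. set (h := Rabs (Im zeta)). set (r := IZR n + eps / 2).
  rewrite theta_term_e2pi. fold r. unfold e2pi. rewrite Cmod_cexp. apply exp_le_exp.
  assert (Hre : Re (RtoC (2 * PI) * Ci * (RtoC (1 / 2) * (RtoC r * RtoC r) * tau
                  + RtoC r * (zeta + RtoC (eps' / 2))))%C = - PI * y * r ^ 2 - 2 * PI * (r * Im zeta)).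
  { unfold y. destruct tau, zeta. simpl. field. }
  rewrite Hre.
  assert (Hpi : 0 < PI) by apply PI_RGT_0.
  assert (Hn : Rabs (IZR n) <= Rabs r + 1 / 2).
  { replace (IZR n) with (r + - (eps / 2)) by (unfold r; ring).
    eapply Rle_trans; [apply Rabs_triang|]. rewrite Rabs_Ropp.
    unfold Rdiv. rewrite Rabs_mult, (Rabs_right (/ 2)) by lra. lra. }
  assert (Hrz : - (r * Im zeta) <= Rabs r * h).
  { unfold h. rewrite <- Rabs_mult, <- Rabs_Ropp. apply Rle_abs. }
  rewrite <- (pow2_abs r).
  (* completing the square in |r| *)
  assert (Hq : - PI * y * Rabs r ^ 2 + (2 * PI * h + 1) * Rabs r <= (2 * PI * h + 1) ^ 2 / (4 * PI * y)).
  { assert (Hpy : 0 < 4 * PI * y) by nra.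
    apply Rmult_le_reg_r with (4 * PI * y); [lra|].
    replace ((2 * PI * h + 1) ^ 2 / (4 * PI * y) * (4 * PI * y)) with ((2 * PI * h + 1) ^ 2) by (field; split; lra).
    pose proof (pow2_ge_0 (2 * PI * h + 1 - 2 * PI * y * Rabs r)). nra. }
  assert (0 <= h) by apply Rabs_pos.
  nra.
Qed.

Definition is_lim_Cseq (u : nat -> C) (l : C) :=
  is_lim_seq (fun M => Re (u M)) (Re l) /\ is_lim_seq (fun M => Im (u M)) (Im l).

Lemma is_lim_Cseq_const c : is_lim_Cseq (fun _ => c) c.
Proof. split; apply is_lim_seq_const. Qed.

Lemma is_lim_Cseq_plus u v a b :
  is_lim_Cseq u a -> is_lim_Cseq v b -> is_lim_Cseq (fun M => u M + v M)%C (a + b)%C.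
Proof. intros [H1 H2] [H3 H4]. split; simpl; apply is_lim_seq_plus'; auto. Qed.

Lemma is_lim_Cseq_mult u v a b :
  is_lim_Cseq u a -> is_lim_Cseq v b -> is_lim_Cseq (fun M => u M * v M)%C (a * b)%C.
Proof.
  intros [H1 H2] [H3 H4]. split; simpl.
  - apply is_lim_seq_minus'; apply is_lim_seq_mult'; auto.
  - apply is_lim_seq_plus'; apply is_lim_seq_mult'; auto.
Qed.

Lemma is_lim_Cseq_ext u v a : (forall M, u M = v M) -> is_lim_Cseq u a -> is_lim_Cseq v a.
Proof. intros E [H1 H2]. split; eapply is_lim_seq_ext; eauto; intros; simpl; rewrite E; auto. Qed.

Lemma is_lim_Cseq_unique u a b : is_lim_Cseq u a -> is_lim_Cseq u b -> a = b.
Proof.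
  intros [H1 H2] [H3 H4]. apply is_lim_seq_unique in H1, H2, H3, H4.
  rewrite H1 in H3. rewrite H2 in H4. injection H3; injection H4.
  destruct a, b; simpl. congruence.
Qed.

Lemma is_lim_Cseq_csum {A} (l : list A) (u : A -> nat -> C) (a : A -> C) :
  (forall x, In x l -> is_lim_Cseq (u x) (a x)) ->
  is_lim_Cseq (fun M => csum l (fun x => u x M)) (csum l a).
Proof.
  induction l; simpl; intros H; [apply is_lim_Cseq_const|].
  apply is_lim_Cseq_plus; auto.
Qed.

Lemma is_lim_Cseq_squeeze u e : (forall M, Cmod (u M) <= e M) -> is_lim_seq e 0 ->
  is_lim_Cseq u 0%C.
Proof.
  intros H He. assert (Hm : is_lim_seq (fun M => - e M) 0).
  { apply is_lim_seq_opp in He. simpl in He. rewrite Ropp_0 in He. exact He. }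
  split; simpl; apply is_lim_seq_le_le with (fun M => - e M) e; auto; intros M;
    apply Rabs_le_between; eapply Rle_trans; try apply H.
  - apply re_le_Cmod.
  - apply im_le_Cmod.
Qed.

Lemma ex_series_exp_dominated (a : nat -> R) K :
  (forall m, Rabs (a m) <= K * exp (- INR m)) -> ex_series a.
Proof.
  intros H. apply (ex_series_le a (fun m => scal K (exp (-1) ^ m))).
  - intros m. rewrite <- exp_INR_mult. replace (INR m * -1) with (- INR m) by ring. apply H.
  - apply (ex_series_scal_l (K := R_AbsRing) (V := R_NormedModule)), ex_series_geom.
    rewrite Rabs_right by (left; apply exp_pos).
    rewrite <- exp_0. apply exp_increasing. lra.
Qed.

Lemma is_lim_Cseq_series (g : nat -> C) K : (forall m, Cmod (g m) <= K * exp (- INR m)) ->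
  is_lim_Cseq (fun M => (sum_n (fun m => Re (g m)) M, sum_n (fun m => Im (g m)) M))
    (Series (fun m => Re (g m)), Series (fun m => Im (g m))).
Proof.
  intros H. split; simpl; apply (Series_correct (fun m => _ (g m)));
    apply ex_series_exp_dominated with K; intros m; (eapply Rle_trans; [|apply H]).
  - apply re_le_Cmod.
  - apply im_le_Cmod.
Qed.

(* [-M-1 .. M], listed in the order of the partial sums of the two series defining [Zsum] *)
Definition zrange (M : nat) : list Z :=
  map Z.of_nat (seq 0 (S M)) ++ map (fun m => (- Z.of_nat m - 1)%Z) (seq 0 (S M)).

Lemma Zsum_is_lim (f : Z -> C) K : (forall n, Cmod (f n) <= K * exp (- Rabs (IZR n))) ->
  is_lim_Cseq (fun M => csum (zrange M) f) (Zsum f).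
Proof.
  intros H.
  assert (HK : 0 <= K).
  { specialize (H 0%Z). rewrite Rabs_R0, Ropp_0, exp_0, Rmult_1_r in H.
    eapply Rle_trans; [apply Cmod_ge_0|exact H]. }
  assert (Hpos : forall m, Cmod (f (Z.of_nat m)) <= K * exp (- INR m)).
  { intros m. rewrite INR_IZR_INZ, <- (Rabs_right (IZR (Z.of_nat m))) by (apply Rle_ge, IZR_le; lia).
    apply H. }
  assert (Hneg : forall m, Cmod (f (- Z.of_nat m - 1)%Z) <= K * exp (- INR m)).
  { intros m. eapply Rle_trans; [apply H|]. apply Rmult_le_compat_l; [exact HK|].
    apply exp_le_exp. rewrite Rabs_left1, minus_IZR, opp_IZR, <- INR_IZR_INZ;
      [|apply IZR_le; lia]. lra. }
  eapply is_lim_Cseq_ext;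
    [|exact (is_lim_Cseq_plus _ _ _ _ (is_lim_Cseq_series _ _ Hpos) (is_lim_Cseq_series _ _ Hneg))].
  intros M. apply injective_projections; cbn [fst snd].
  - change (fst (csum (zrange M) f)) with (Re (csum (zrange M) f)).
    rewrite Re_csum. unfold zrange. rewrite rsum_app, !rsum_map, !rsum_seq. reflexivity.
  - change (snd (csum (zrange M) f)) with (Im (csum (zrange M) f)).
    rewrite Im_csum. unfold zrange. rewrite rsum_app, !rsum_map, !rsum_seq. reflexivity.
Qed.

Definition root10 (e : Z) : C := e2pi (RtoC (IZR e / 10)).

Lemma root10_add a b : root10 (a + b) = (root10 a * root10 b)%C.
Proof. unfold root10. rewrite <- e2pi_add, <- RtoC_plus, plus_IZR. f_equal. f_equal. field. Qed.

Lemma root10_mul10 q : root10 (10 * q) = 1%C.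
Proof. unfold root10. rewrite mult_IZR. replace (10 * IZR q / 10) with (IZR q) by field. apply e2pi_IZR. Qed.

Lemma root10_0 : root10 0 = 1%C.
Proof. exact (root10_mul10 0). Qed.

Lemma root10_5 : root10 5 = (-1)%C.
Proof. unfold root10. rewrite <- e2pi_half. do 2 f_equal. field. Qed.

Lemma Cmod_root10 e : Cmod (root10 e) = 1.
Proof. apply Cmod_e2pi_real. Qed.

Lemma root10_mod10 e : root10 (e mod 10) = root10 e.
Proof. rewrite (Z.div_mod e 10) at 2 by lia. now rewrite root10_add, root10_mul10, Cmult_1_l. Qed.

Lemma root10_mod e :
  root10 e = (RtoC (if (e mod 10 <? 5)%Z then 1 else -1) * root10 ((e mod 10) mod 5))%C.
Proof.
  rewrite <- root10_mod10.
  assert (Hr : (0 <= e mod 10 < 10)%Z) by (apply Z.mod_pos_bound; lia).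
  destruct (Z.ltb_spec (e mod 10) 5).
  - rewrite (Z.mod_small (e mod 10) 5) by lia. ring.
  - replace ((e mod 10) mod 5)%Z with (e mod 10 - 5)%Z.
    + replace (e mod 10)%Z with (5 + (e mod 10 - 5))%Z at 1 by ring.
      rewrite root10_add, root10_5. ring.
    + replace (e mod 10)%Z with ((e mod 10 - 5) + 1 * 5)%Z at 2 by ring.
      rewrite Z.mod_add, (Z.mod_small (e mod 10 - 5)); lia.
Qed.

(* [w = e^(2 pi i / 10)] is a root of [Phi_10 = X^4 - X^3 + X^2 - X + 1]: it is a root of
   [X^5 + 1 = (X + 1) Phi_10] but not of [X + 1], since [Re w = cos (pi/5) > 0]. *)
Lemma root10_cyclotomic :
  (root10 4 - root10 3 + root10 2 - root10 1 + 1 = 0)%C.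
Proof.
  assert (Hpow : forall k, root10 (Z.of_nat k) = (root10 1 ^ k)%C).
  { induction k; [apply root10_0|].
    rewrite Nat2Z.inj_succ, <- Z.add_1_r, root10_add, IHk. simpl. ring. }
  change 4%Z with (Z.of_nat 4). change 3%Z with (Z.of_nat 3). change 2%Z with (Z.of_nat 2).
  rewrite !Hpow.
  assert (H5 : (root10 1 ^ 5 + 1 = 0)%C) by (rewrite <- (Hpow 5%nat); simpl Z.of_nat; rewrite root10_5; ring).
  assert (Hne : (root10 1 + 1)%C <> 0%C).
  { intros E. apply (f_equal Re) in E. unfold root10 in E. rewrite e2pi_real in E. simpl in E.
    assert (0 < cos (2 * PI * (1 / 10))) by (apply cos_gt_0; pose proof PI_RGT_0; lra). lra. }
  transitivity (/ (root10 1 + 1) * (root10 1 ^ 5 + 1))%C.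
  - field. exact Hne.
  - rewrite H5. ring.
Qed.

(* Coefficients [(a0, ..., a4)] of the combination [a0 + a1 w + ... + a4 w^4], [w = root10 1];
   since [w^5 = -1] every power of [w] is [+-] one of [1, w, ..., w^4]. *)
Definition cvec := (Z * Z * Z * Z * Z)%type.

Definition cvec_eval (a : cvec) : C :=
  let '(a0, a1, a2, a3, a4) := a in
  (IZR a0 * root10 0 + IZR a1 * root10 1 + IZR a2 * root10 2
   + IZR a3 * root10 3 + IZR a4 * root10 4)%C.

Definition cvec_add (a : cvec) (s e : Z) : cvec :=
  let r := (e mod 10)%Z in
  let s' := if (r <? 5)%Z then s else (- s)%Z in
  let '(a0, a1, a2, a3, a4) := a in
  match (r mod 5)%Z with
  | 0%Z => ((a0 + s')%Z, a1, a2, a3, a4)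
  | 1%Z => (a0, (a1 + s')%Z, a2, a3, a4)
  | 2%Z => (a0, a1, (a2 + s')%Z, a3, a4)
  | 3%Z => (a0, a1, a2, (a3 + s')%Z, a4)
  | _ => (a0, a1, a2, a3, (a4 + s')%Z)
  end.

Definition cvec_of (l : list (Z * Z)) : cvec :=
  fold_right (fun se a => cvec_add a (fst se) (snd se)) (0, 0, 0, 0, 0)%Z l.

Definition cvec_null (a : cvec) : bool :=
  let '(a0, a1, a2, a3, a4) := a in
  ((a0 - a4 =? 0) && (a1 + a4 =? 0) && (a2 - a4 =? 0) && (a3 + a4 =? 0))%Z%bool.

Lemma cvec_eval_add a s e : cvec_eval (cvec_add a s e) = (cvec_eval a + IZR s * root10 e)%C.
Proof.
  rewrite (root10_mod e). unfold cvec_add.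
  assert (Hr : (0 <= (e mod 10) mod 5 < 5)%Z) by (apply Z.mod_pos_bound; lia).
  destruct a as [[[[a0 a1] a2] a3] a4].
  destruct (Z.ltb (e mod 10) 5);
  (assert (H : ((e mod 10) mod 5 = 0 \/ (e mod 10) mod 5 = 1 \/ (e mod 10) mod 5 = 2 \/
          (e mod 10) mod 5 = 3 \/ (e mod 10) mod 5 = 4)%Z) by lia;
   destruct H as [H|[H|[H|[H|H]]]]; rewrite H; unfold cvec_eval; rewrite ?plus_IZR, ?opp_IZR;
   rewrite ?RtoC_plus, ?RtoC_opp; ring).
Qed.

Lemma cvec_eval_of l : cvec_eval (cvec_of l) = csum l (fun se => IZR (fst se) * root10 (snd se))%C.
Proof.
  induction l as [|se l IH]; simpl.
  - rewrite !Cmult_0_l. ring.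
  - rewrite cvec_eval_add, IH. ring.
Qed.

Lemma cvec_eval_null a : cvec_null a = true -> cvec_eval a = 0%C.
Proof.
  destruct a as [[[[a0 a1] a2] a3] a4]. unfold cvec_null. intros H.
  repeat rewrite Bool.andb_true_iff in H. destruct H as [[[H1 H2] H3] H4].
  apply Z.eqb_eq in H1, H2, H3, H4.
  replace a0 with a4 by lia. replace a1 with (- a4)%Z by lia.
  replace a2 with a4 by lia. replace a3 with (- a4)%Z by lia.
  unfold cvec_eval. rewrite root10_0, opp_IZR, RtoC_opp.
  transitivity (IZR a4 * (root10 4 - root10 3 + root10 2 - root10 1 + 1))%C; [ring|].
  rewrite root10_cyclotomic. ring.
Qed.

Notation Z4 := (Z * Z * Z * Z)%type.

Lemma NoDup_list_prod {A B} (l1 : list A) (l2 : list B) :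
  NoDup l1 -> NoDup l2 -> NoDup (list_prod l1 l2).
Proof.
  intros H1 H2. induction H1; simpl; [constructor|].
  apply NoDup_app; auto.
  - apply FinFun.Injective_map_NoDup; auto. intros u v E; now inversion E.
  - intros [a b] Ha Hb. apply in_map_iff in Ha. destruct Ha as (y & Ey & _).
    inversion Ey; subst. apply in_prod_iff in Hb. tauto.
Qed.

Definition zbox (M : nat) : list Z4 :=
  list_prod (list_prod (list_prod (zrange M) (zrange M)) (zrange M)) (zrange M).

Lemma in_zrange M z : In z (zrange M) <-> (- Z.of_nat M - 1 <= z <= Z.of_nat M)%Z.
Proof.
  unfold zrange. rewrite in_app_iff, !in_map_iff. split.
  - intros [(k & <- & Hk)|(k & <- & Hk)]; apply in_seq in Hk; lia.
  - intros H. destruct (Z_le_gt_dec 0 z).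
    + left. exists (Z.to_nat z). split; [lia|apply in_seq; lia].
    + right. exists (Z.to_nat (- z - 1)). split; [lia|apply in_seq; lia].
Qed.

Lemma NoDup_zbox M : NoDup (zbox M).
Proof.
  assert (H : NoDup (zrange M)).
  { unfold zrange. apply NoDup_app.
    - apply FinFun.Injective_map_NoDup; [intros ? ? ?; lia|apply seq_NoDup].
    - apply FinFun.Injective_map_NoDup; [intros ? ? ?; lia|apply seq_NoDup].
    - intros a Ha Hb. apply in_map_iff in Ha, Hb.
      destruct Ha as (x & <- & _), Hb as (y & E & _). lia. }
  unfold zbox. repeat apply NoDup_list_prod; exact H.
Qed.

Lemma in_zbox M n : In n (zbox M) <-> let '(a, b, c, d) := n in
  In a (zrange M) /\ In b (zrange M) /\ In c (zrange M) /\ In d (zrange M).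
Proof. destruct n as [[[a b] c] d]. lazy beta iota. unfold zbox. rewrite !in_prod_iff. tauto. Qed.

Definition zcentered (M : nat) : list Z :=
  map (fun k => (Z.of_nat k - Z.of_nat M)%Z) (seq 0 (2 * M + 1)).

Definition cube (M : nat) : list Z4 :=
  list_prod (list_prod (list_prod (zcentered M) (zcentered M)) (zcentered M)) (zcentered M).

Definition in_cube (M : nat) (x : Z4) : bool :=
  let '(t, d, P, D) := x in
  ((Z.abs t <=? Z.of_nat M) && (Z.abs d <=? Z.of_nat M)
   && (Z.abs P <=? Z.of_nat M) && (Z.abs D <=? Z.of_nat M))%Z%bool.

Lemma in_cube_spec M x : In x (cube M) <-> in_cube M x = true.
Proof.
  assert (Hc : forall z, In z (zcentered M) <-> (Z.abs z <=? Z.of_nat M)%Z = true).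
  { intros z. unfold zcentered. rewrite in_map_iff, Z.leb_le. split.
    - intros (k & <- & Hk). apply in_seq in Hk. lia.
    - intros H. exists (Z.to_nat (z + Z.of_nat M)). split; [lia|apply in_seq; lia]. }
  destruct x as [[[t d] P] D]. unfold cube, in_cube.
  rewrite !in_prod_iff, !Hc, !Bool.andb_true_iff. tauto.
Qed.

Lemma NoDup_cube M : NoDup (cube M).
Proof.
  unfold cube. repeat apply NoDup_list_prod;
    (apply FinFun.Injective_map_NoDup; [intros ? ? ?; lia|apply seq_NoDup]).
Qed.

Lemma csum_cube_involution (g : Z4 -> Z4) M F :
  (forall x, g (g x) = x) -> (forall x, in_cube M (g x) = in_cube M x) ->
  csum (cube M) (fun x => F (g x)) = csum (cube M) F.
Proof.
  intros Hg Hc. rewrite <- csum_map. apply csum_perm, NoDup_Permutation.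
  - apply FinFun.Injective_map_NoDup; [|apply NoDup_cube].
    intros a b E. now rewrite <- (Hg a), <- (Hg b), E.
  - apply NoDup_cube.
  - intros x. rewrite in_map_iff, in_cube_spec. split.
    + intros (y & <- & Hy). rewrite Hc. now apply in_cube_spec.
    + intros Hx. exists (g x). rewrite Hg, in_cube_spec, Hc. auto.
Qed.

(* In the coordinates [(t, d, P, D)] the theta quadruple product has the quadratic form
   [(t + 1/5)^2 + d^2 + P^2 + D^2]; it is invariant under the signed permutations of
   [(d, P, D)]. *)
Definition quad_part (x : Z4) : Z * Z := let '(t, d, P, D) := x in (t, (d * d + P * P + D * D)%Z).

Definition xmod10 (x : Z4) : Z4 :=
  let '(t, d, P, D) := x in ((t mod 10)%Z, (d mod 10)%Z, (P mod 10)%Z, (D mod 10)%Z).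

Definition good_symmetry (g : Z4 -> Z4) : Prop :=
  (forall M F, csum (cube M) (fun x => F (g x)) = csum (cube M) F) /\
  (forall x, quad_part (g x) = quad_part x) /\
  (forall x, xmod10 (g (xmod10 x)) = xmod10 (g x)).

Lemma good_symmetry_compose a b :
  good_symmetry a -> good_symmetry b -> good_symmetry (fun x => a (b x)).
Proof.
  intros (Ia & Qa & Ca) (Ib & Qb & Cb). split; [|split].
  - intros M F. rewrite (Ib M (fun y => F (a y))). apply Ia.
  - intros x. rewrite Qa; auto.
  - intros x. now rewrite <- Ca, Cb, Ca.
Qed.

Lemma good_symmetry_involution g : (forall x, g (g x) = x) ->
  (forall M x, in_cube M (g x) = in_cube M x) -> (forall x, quad_part (g x) = quad_part x) ->
  (forall x, xmod10 (g (xmod10 x)) = xmod10 (g x)) -> good_symmetry g.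
Proof. intros Hg Hc Hq Hm. split; [|split]; auto. intros M F. now apply csum_cube_involution. Qed.

Definition neg_d (x : Z4) : Z4 := let '(t, d, P, D) := x in (t, (- d)%Z, P, D).
Definition neg_P (x : Z4) : Z4 := let '(t, d, P, D) := x in (t, d, (- P)%Z, D).
Definition neg_D (x : Z4) : Z4 := let '(t, d, P, D) := x in (t, d, P, (- D)%Z).
Definition swap_dP (x : Z4) : Z4 := let '(t, d, P, D) := x in (t, P, d, D).
Definition swap_dD (x : Z4) : Z4 := let '(t, d, P, D) := x in (t, D, P, d).
Definition swap_PD (x : Z4) : Z4 := let '(t, d, P, D) := x in (t, d, D, P).

Lemma opp_mod10 a : ((- (a mod 10)) mod 10 = (- a) mod 10)%Z.
Proof. rewrite <- !Z.sub_0_l, (Zminus_mod 0 a). reflexivity. Qed.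

Ltac solve_good_symmetry :=
  apply good_symmetry_involution;
  [ intros [[[? ?] ?] ?]; simpl; now rewrite ?Z.opp_involutive
  | intros ? [[[? ?] ?] ?]; simpl; apply Bool.eq_iff_eq_true;
    rewrite !Bool.andb_true_iff, !Z.leb_le; split; intros; lia
  | intros [[[? ?] ?] ?]; simpl; f_equal; ring
  | intros [[[? ?] ?] ?]; simpl; rewrite ?opp_mod10, ?Zmod_mod; reflexivity ].

Lemma good_neg_d : good_symmetry neg_d. Proof. solve_good_symmetry. Qed.
Lemma good_neg_P : good_symmetry neg_P. Proof. solve_good_symmetry. Qed.
Lemma good_neg_D : good_symmetry neg_D. Proof. solve_good_symmetry. Qed.
Lemma good_swap_dP : good_symmetry swap_dP. Proof. solve_good_symmetry. Qed.
Lemma good_swap_dD : good_symmetry swap_dD. Proof. solve_good_symmetry. Qed.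
Lemma good_swap_PD : good_symmetry swap_PD. Proof. solve_good_symmetry. Qed.

Definition compose_all (l1 l2 : list (Z4 -> Z4)) : list (Z4 -> Z4) :=
  flat_map (fun a => map (fun b x => a (b x)) l2) l1.

Definition symmetries : list (Z4 -> Z4) :=
  compose_all [fun x => x; neg_d] (compose_all [fun x => x; neg_P] (compose_all [fun x => x; neg_D]
    (compose_all [fun x => x; swap_dP] [fun x => x; swap_dD; swap_PD]))).

Lemma good_compose_all l1 l2 :
  List.Forall good_symmetry l1 -> List.Forall good_symmetry l2 -> List.Forall good_symmetry (compose_all l1 l2).
Proof.
  intros H1 H2. apply List.Forall_forall. intros g Hg.
  apply in_flat_map in Hg. destruct Hg as (a & Ha & Hg). apply in_map_iff in Hg.
  destruct Hg as (b & <- & Hb). apply good_symmetry_compose;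
    [eapply List.Forall_forall in H1|eapply List.Forall_forall in H2]; eauto.
Qed.

Lemma good_symmetries : List.Forall good_symmetry symmetries.
Proof.
  assert (Hid : good_symmetry (fun x => x)).
  { split; [|split]; try reflexivity. intros [[[? ?] ?] ?]; simpl; now rewrite !Zmod_mod. }
  unfold symmetries. repeat apply good_compose_all;
    repeat (apply List.Forall_cons;
      [auto using good_neg_d, good_neg_P, good_neg_D, good_swap_dP, good_swap_dD, good_swap_PD|]);
    apply List.Forall_nil.
Qed.

Lemma csum_cube_symmetries M F :
  csum (cube M) (fun x => csum symmetries (fun g => F (g x))) = (48 * csum (cube M) F)%C.
Proof.
  rewrite csum_comm.
  assert (H : forall l, List.Forall good_symmetry l ->
    csum l (fun g => csum (cube M) (fun x => F (g x))) = (INR (length l) * csum (cube M) F)%C).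
  { induction 1 as [|g l [Hg _] _ IH]; cbn [csum length]; [simpl; ring|].
    rewrite Hg, IH, S_INR, RtoC_plus. ring. }
  rewrite H by apply good_symmetries. do 2 f_equal. simpl. ring.
Qed.

Definition change_vars (n : Z4) : Z4 :=
  let '(n1, n2, m1, m2) := n in ((m1 + m2)%Z, (m1 - m2)%Z, (n1 + n2 + 1)%Z, (n1 - n2)%Z).

Definition admissible (x : Z4) : bool :=
  let '(t, d, P, D) := x in (Z.odd (P + D) && Z.even (d - t))%bool.

Lemma admissible_change_vars n : admissible (change_vars n) = true.
Proof.
  destruct n as [[[n1 n2] m1] m2]. simpl.
  replace (n1 + n2 + 1 + (n1 - n2))%Z with (1 + 2 * n1)%Z by ring.
  replace (m1 - m2 - (m1 + m2))%Z with (2 * (- m2))%Z by ring.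
  now rewrite Z.odd_add_mul_2, Z.even_mul.
Qed.

Lemma admissible_xmod10 x : admissible (xmod10 x) = admissible x.
Proof.
  destruct x as [[[t d] P] D]. simpl.
  replace (P + D)%Z with (P mod 10 + D mod 10 + 2 * (5 * (P / 10 + D / 10)))%Z by (Z.div_mod_to_equations; lia).
  replace (d - t)%Z with (d mod 10 - t mod 10 + 2 * (5 * (d / 10 - t / 10)))%Z by (Z.div_mod_to_equations; lia).
  rewrite Z.odd_add_mul_2, Z.even_add_mul_2. reflexivity.
Qed.

Lemma csum_zbox_change_vars M (F : Z4 -> C) : (forall x, admissible x = false -> F x = 0%C) ->
  csum (filter (fun n => in_cube M (change_vars n)) (zbox M)) (fun n => F (change_vars n))
  = csum (cube M) F.
Proof.
  intros HF. rewrite <- (csum_map change_vars _ F), (csum_filter admissible (cube M)).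
  rewrite (csum_eq0 (filter (fun x => negb (admissible x)) (cube M))), Cplus_0_r.
  2:{ intros x Hx. apply filter_In in Hx. apply HF, Bool.negb_true_iff, Hx. }
  apply csum_perm, NoDup_Permutation.
  - apply FinFun.Injective_map_NoDup; [|apply NoDup_filter, NoDup_zbox].
    intros [[[a b] c] d] [[[a' b'] c'] d'] E. simpl in E. injection E as E1 E2 E3 E4.
    f_equal; [f_equal; [f_equal|]|]; lia.
  - apply NoDup_filter, NoDup_cube.
  - intros x. rewrite in_map_iff, filter_In, in_cube_spec. split.
    + intros (n & <- & Hn). apply filter_In in Hn. split; [apply Hn|apply admissible_change_vars].
    + destruct x as [[[t d] P] D]. intros [Hx Ha]. simpl in Hx, Ha.
      rewrite !Bool.andb_true_iff, !Z.leb_le in Hx. rewrite Bool.andb_true_iff in Ha.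
      destruct Ha as [HPD Hdt]. apply Z.odd_spec in HPD. apply Z.even_spec in Hdt.
      destruct HPD as [k Hk], Hdt as [j Hj].
      exists (k, (k - D)%Z, (t + j)%Z, (- j)%Z).
      assert (Hn : change_vars (k, k - D, t + j, - j)%Z = (t, d, P, D)).
      { simpl. f_equal; [f_equal; [f_equal|]|]; lia. }
      split; [exact Hn|]. apply filter_In. rewrite Hn. split.
      * apply in_zbox. rewrite !in_zrange. lia.
      * simpl. rewrite !Bool.andb_true_iff, !Z.leb_le. lia.
Qed.

Lemma not_in_cube_change_vars M a b c d : in_cube M (change_vars (a, b, c, d)) = false ->
  INR M <= Rabs (IZR a) + Rabs (IZR b) + Rabs (IZR c) + Rabs (IZR d).
Proof.
  intros H. simpl in H. rewrite !Bool.andb_false_iff, !Z.leb_gt in H.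
  rewrite <- !abs_IZR, INR_IZR_INZ, <- !plus_IZR. apply IZR_le. lia.
Qed.

(* [QT s r a1 a2 f1 f2] stands for
   [s w^r theta[1; a1/5] theta[1; a2/5] theta[1/5; f1/5](zeta) theta[1/5; f2/5](zeta)],
   [w = e^(2 pi i / 10)]. *)
Record quartic_term := QT { qt_sign : Z; qt_root : Z; qt_a1 : Z; qt_a2 : Z; qt_f1 : Z; qt_f2 : Z }.

Definition qt_coef (p : quartic_term) : C := (IZR (qt_sign p) * root10 (qt_root p))%C.

Definition thetaA (tau : C) (c : Z) : C := theta_const 1 (IZR c / 5) tau.
Definition thetaF (zeta tau : C) (k : Z) : C := theta (1 / 5) (IZR k / 5) zeta tau.

Definition thetaA_term (tau : C) (c n : Z) : C := theta_term 1 (IZR c / 5) 0 tau n.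
Definition thetaF_term (zeta tau : C) (k m : Z) : C := theta_term (1 / 5) (IZR k / 5) zeta tau m.

Definition qt_value (zeta tau : C) (p : quartic_term) : C :=
  (qt_coef p * thetaA tau (qt_a1 p) * thetaA tau (qt_a2 p)
   * thetaF zeta tau (qt_f1 p) * thetaF zeta tau (qt_f2 p))%C.

Definition qt_lattice_term (zeta tau : C) (p : quartic_term) (n : Z4) : C :=
  let '(n1, n2, m1, m2) := n in
  (qt_coef p * thetaA_term tau (qt_a1 p) n1 * thetaA_term tau (qt_a2 p) n2
   * thetaF_term zeta tau (qt_f1 p) m1 * thetaF_term zeta tau (qt_f2 p) m2)%C.

(* All terms of an identity share [f1 + f2 = kap (mod 10)]; the characteristics then contribute
   the common factor [e(kap/100)] times [w^(qt_phase kap p x)] at the point [x = (t, d, P, D)]. *)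
Definition qt_valid (kap : Z) (p : quartic_term) : bool :=
  (Z.even (qt_a1 p + qt_a2 p) && Z.even (qt_a1 p - qt_a2 p)
   && Z.even (qt_f1 p + qt_f2 p) && Z.even (qt_f1 p - qt_f2 p)
   && ((qt_f1 p + qt_f2 p - kap) mod 10 =? 0))%Z%bool.

Definition qt_phase (kap : Z) (p : quartic_term) (x : Z4) : Z :=
  let '(t, d, P, D) := x in
  (qt_root p + (qt_a1 p + qt_a2 p) / 2 * P + (qt_a1 p - qt_a2 p) / 2 * D
   + (qt_f1 p + qt_f2 p) / 2 * t + (qt_f1 p - qt_f2 p) / 2 * d + (qt_f1 p + qt_f2 p - kap) / 10)%Z.

Definition gauss_factor (zeta tau : C) (tq : Z * Z) : C :=
  let '(t, q) := tq in
  e2pi (RtoC (((IZR t + 1 / 5) ^ 2 + IZR q) / 4) * tau + RtoC (IZR t + 1 / 5) * zeta)%C.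

Lemma even_double a : Z.even a = true -> a = (2 * (a / 2))%Z.
Proof. intros H. apply Z.even_spec in H. destruct H as [m ->]. rewrite Z.mul_comm, Z.div_mul; lia. Qed.

Lemma qt_lattice_term_change_vars zeta tau kap p n : qt_valid kap p = true ->
  qt_lattice_term zeta tau p n = (e2pi (RtoC (IZR kap / 100))
    * gauss_factor zeta tau (quad_part (change_vars n))
    * (IZR (qt_sign p) * root10 (qt_phase kap p (change_vars n))))%C.
Proof.
  intros Hv. unfold qt_valid in Hv. rewrite !Bool.andb_true_iff, Z.eqb_eq in Hv.
  destruct Hv as [[[[Ha1 Ha2] Hf1] Hf2] Hk].
  apply even_double in Ha1, Ha2, Hf1, Hf2.
  destruct n as [[[n1 n2] m1] m2].
  unfold qt_lattice_term, change_vars, quad_part, qt_phase, gauss_factor, qt_coef, root10,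
    thetaA_term, thetaF_term. rewrite !theta_term_e2pi.
  set (al := ((qt_a1 p + qt_a2 p) / 2)%Z) in *. set (be := ((qt_a1 p - qt_a2 p) / 2)%Z) in *.
  set (ga := ((qt_f1 p + qt_f2 p) / 2)%Z) in *. set (de := ((qt_f1 p - qt_f2 p) / 2)%Z) in *.
  set (la := ((qt_f1 p + qt_f2 p - kap) / 10)%Z) in *.
  assert (Hla : (qt_f1 p + qt_f2 p - kap = 10 * la)%Z) by (unfold la; Z.div_mod_to_equations; lia).
  replace (qt_a1 p) with (al + be)%Z by lia. replace (qt_a2 p) with (al - be)%Z by lia.
  replace (qt_f1 p) with (ga + de)%Z by lia. replace (qt_f2 p) with (ga - de)%Z by lia.
  replace kap with (2 * ga - 10 * la)%Z by lia.
  assert (Hl : forall s a b c d e : C,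
    (s * e2pi a * e2pi b * e2pi c * e2pi d * e2pi e = s * e2pi (a + b + c + d + e))%C)
    by (intros; rewrite !e2pi_add; ring).
  assert (Hr : forall s a b c : C, (e2pi a * e2pi b * (s * e2pi c) = s * e2pi (a + b + c))%C)
    by (intros; rewrite !e2pi_add; ring).
  rewrite Hl, Hr. do 2 f_equal.
  repeat rewrite ?plus_IZR, ?minus_IZR, ?mult_IZR.
  destruct tau, zeta. apply injective_projections; simpl; field.
Qed.

Lemma qt_phase_xmod10 kap p x : (qt_phase kap p (xmod10 x) mod 10 = qt_phase kap p x mod 10)%Z.
Proof.
  destruct x as [[[t d] P] D]. unfold xmod10, qt_phase.
  set (al := ((qt_a1 p + qt_a2 p) / 2)%Z). set (be := ((qt_a1 p - qt_a2 p) / 2)%Z).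
  set (ga := ((qt_f1 p + qt_f2 p) / 2)%Z). set (de := ((qt_f1 p - qt_f2 p) / 2)%Z).
  set (c := (qt_root p + (qt_f1 p + qt_f2 p - kap) / 10)%Z).
  match goal with |- (?L mod 10 = ?R mod 10)%Z =>
    replace R with (L + (al * (P / 10) + be * (D / 10) + ga * (t / 10) + de * (d / 10)) * 10)%Z
  end.
  - now rewrite Z.mod_add.
  - unfold c. Z.div_mod_to_equations. nia.
Qed.

Definition orbit_terms (kap : Z) (data : list quartic_term) (x : Z4) : list (Z * Z) :=
  flat_map (fun g => if admissible (g x)
                     then map (fun p => (qt_sign p, (qt_phase kap p (g x) mod 10)%Z)) data
                     else []) symmetries.

Lemma orbit_terms_xmod10 kap data x : orbit_terms kap data (xmod10 x) = orbit_terms kap data x.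
Proof.
  unfold orbit_terms. induction good_symmetries as [|g l (_ & _ & Hg) _ IH]; [reflexivity|].
  cbn [flat_map]. rewrite IH. f_equal.
  assert (Hm : xmod10 (g (xmod10 x)) = xmod10 (g x)) by apply Hg.
  rewrite <- (admissible_xmod10 (g (xmod10 x))), Hm, admissible_xmod10.
  destruct (admissible (g x)); [|reflexivity].
  apply map_ext. intros p. now rewrite <- (qt_phase_xmod10 kap p (g (xmod10 x))), Hm, qt_phase_xmod10.
Qed.

Definition residues10 : list Z := map Z.of_nat (seq 0 10).

Definition orbit_check (kap : Z) (data : list quartic_term) : bool :=
  forallb (fun x => cvec_null (cvec_of (orbit_terms kap data x)))
    (list_prod (list_prod (list_prod residues10 residues10) residues10) residues10).

Lemma orbit_check_spec kap data x : orbit_check kap data = true ->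
  cvec_null (cvec_of (orbit_terms kap data x)) = true.
Proof.
  unfold orbit_check. rewrite forallb_forall. intros Hc.
  rewrite <- orbit_terms_xmod10. apply Hc.
  assert (Hr : forall z, In (z mod 10)%Z residues10).
  { intros z. unfold residues10. apply in_map_iff. exists (Z.to_nat (z mod 10)).
    split; [|apply in_seq]; Z.div_mod_to_equations; lia. }
  destruct x as [[[t d] P] D]. repeat apply in_prod; apply Hr.
Qed.

Section LatticeSum.
Variables (zeta tau : C) (kap : Z) (data : list quartic_term).

Definition lattice_term (n : Z4) : C := csum data (fun p => qt_lattice_term zeta tau p n).

Definition image_term (x : Z4) : C :=
  if admissible x
  then (e2pi (RtoC (IZR kap / 100)) * gauss_factor zeta tau (quad_part x)
        * csum data (fun p => IZR (qt_sign p) * root10 (qt_phase kap p x)))%C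
  else 0%C.

Lemma lattice_term_change_vars n : (forall p, In p data -> qt_valid kap p = true) ->
  lattice_term n = image_term (change_vars n).
Proof.
  intros Hv. unfold lattice_term, image_term. rewrite admissible_change_vars, <- csum_mult_l.
  apply csum_ext. intros p Hp. now apply qt_lattice_term_change_vars, Hv.
Qed.

Lemma csum_symmetries_image_term x :
  csum symmetries (fun g => image_term (g x)) = (e2pi (RtoC (IZR kap / 100))
    * gauss_factor zeta tau (quad_part x) * cvec_eval (cvec_of (orbit_terms kap data x)))%C.
Proof.
  rewrite cvec_eval_of. unfold orbit_terms. rewrite csum_flat_map, <- csum_mult_l.
  induction good_symmetries as [|g l (_ & Hq & _) _ IH]; [reflexivity|].
  cbn [csum]. rewrite IH. f_equal. unfold image_term. rewrite Hq.
  destruct (admissible (g x)); [|simpl; ring].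
  rewrite csum_map. f_equal. apply csum_ext. intros p _. simpl. now rewrite root10_mod10.
Qed.

Lemma csum_cube_image_term M : orbit_check kap data = true -> csum (cube M) image_term = 0%C.
Proof.
  intros Hc.
  assert (H48 : (48 * csum (cube M) image_term)%C = 0%C).
  { rewrite <- csum_cube_symmetries. apply (csum_eq0 (cube M)). intros x _.
    rewrite csum_symmetries_image_term, cvec_eval_null by now apply orbit_check_spec.
    ring. }
  apply (f_equal (Cmult (/ 48))) in H48. rewrite Cmult_0_r, Cmult_assoc, Cinv_l in H48.
  - now rewrite Cmult_1_l in H48.
  - intros E. injection E. lra.
Qed.

End LatticeSum.

Lemma csum_zbox_mult M (f1 f2 f3 f4 : Z -> C) :
  csum (zbox M) (fun n => let '(a, b, c, d) := n in f1 a * f2 b * f3 c * f4 d)%C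
  = (csum (zrange M) f1 * csum (zrange M) f2 * csum (zrange M) f3 * csum (zrange M) f4)%C.
Proof.
  unfold zbox. rewrite <- !csum_prod_mult. apply csum_ext. now intros [[[a b] c] d] _.
Qed.

Lemma rsum_zbox_mult M (f1 f2 f3 f4 : Z -> R) :
  rsum (zbox M) (fun n => let '(a, b, c, d) := n in f1 a * f2 b * f3 c * f4 d)
  = rsum (zrange M) f1 * rsum (zrange M) f2 * rsum (zrange M) f3 * rsum (zrange M) f4.
Proof.
  unfold zbox. rewrite <- !rsum_prod_mult. apply rsum_ext. now intros [[[a b] c] d] _.
Qed.

Definition half_decay (z : Z) : R := exp (- (Rabs (IZR z) / 2)).

Definition decay_ratio : R := exp (- (1 / 2)).

Lemma decay_ratio_bounds : 0 < decay_ratio < 1.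
Proof.
  split; [apply exp_pos|]. rewrite <- exp_0. apply exp_increasing. lra.
Qed.

Lemma exp_half_INR m : exp (- (INR m / 2)) = decay_ratio ^ m.
Proof. unfold decay_ratio. rewrite <- exp_INR_mult. f_equal. field. Qed.

Lemma rsum_geom_decay_le M : rsum (seq 0 (S M)) (fun m => decay_ratio ^ m) <= 1 / (1 - decay_ratio).
Proof.
  pose proof decay_ratio_bounds as Hq.
  rewrite rsum_seq, sum_n_Reals, tech3 by lra.
  apply Rmult_le_compat_r; [apply Rlt_le, Rinv_0_lt_compat; lra|].
  pose proof (pow_lt _ (S M) (proj1 Hq)). lra.
Qed.

Lemma rsum_zrange_half_decay_le M : rsum (zrange M) half_decay <= 2 / (1 - decay_ratio).
Proof.
  pose proof decay_ratio_bounds as Hq.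
  unfold zrange. rewrite rsum_app, !rsum_map.
  replace (2 / (1 - decay_ratio)) with (1 / (1 - decay_ratio) + 1 / (1 - decay_ratio)) by (field; lra).
  apply Rplus_le_compat; (eapply Rle_trans; [|apply (rsum_geom_decay_le M)]);
    apply rsum_le; intros m _; rewrite <- exp_half_INR; unfold half_decay; apply exp_le_exp.
  - rewrite <- INR_IZR_INZ, Rabs_right by (apply Rle_ge, pos_INR). lra.
  - rewrite Rabs_left1, minus_IZR, opp_IZR, <- INR_IZR_INZ; [lra|].
    rewrite minus_IZR, opp_IZR, <- INR_IZR_INZ. pose proof (pos_INR m). lra.
Qed.

Section Estimates.
Variables (zeta tau : C).
Hypothesis Htau : 0 < Im tau.

Definition theta_bound : R := Rmax (theta_majorant 0 tau) (theta_majorant zeta tau).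

Lemma theta_bound_nonneg : 0 <= theta_bound.
Proof. eapply Rle_trans; [apply Rlt_le, exp_pos|apply Rmax_l]. Qed.

Lemma Cmod_thetaA_term_le c n : Cmod (thetaA_term tau c n) <= theta_bound * exp (- Rabs (IZR n)).
Proof.
  eapply Rle_trans; [apply Cmod_theta_term_le; [exact Htau|rewrite Rabs_R1; lra]|].
  apply Rmult_le_compat_r; [apply Rlt_le, exp_pos|apply Rmax_l].
Qed.

Lemma Cmod_thetaF_term_le k m : Cmod (thetaF_term zeta tau k m) <= theta_bound * exp (- Rabs (IZR m)).
Proof.
  eapply Rle_trans; [apply Cmod_theta_term_le; [exact Htau|rewrite Rabs_right; lra]|].
  apply Rmult_le_compat_r; [apply Rlt_le, exp_pos|apply Rmax_r].
Qed.

Lemma Cmod_qt_lattice_term_le p a b c d :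
  Cmod (qt_lattice_term zeta tau p (a, b, c, d)) <= Rabs (IZR (qt_sign p)) * theta_bound ^ 4
    * exp (- (Rabs (IZR a) + Rabs (IZR b) + Rabs (IZR c) + Rabs (IZR d))).
Proof.
  unfold qt_lattice_term, qt_coef. rewrite !Cmod_mult, Cmod_R, Cmod_root10, Rmult_1_r.
  replace (exp _) with (exp (- Rabs (IZR a)) * exp (- Rabs (IZR b))
                        * exp (- Rabs (IZR c)) * exp (- Rabs (IZR d)))
    by (rewrite <- !exp_plus; f_equal; ring).
  pose proof (Cmod_thetaA_term_le (qt_a1 p) a). pose proof (Cmod_thetaA_term_le (qt_a2 p) b).
  pose proof (Cmod_thetaF_term_le (qt_f1 p) c). pose proof (Cmod_thetaF_term_le (qt_f2 p) d).
  pose proof (Rabs_pos (IZR (qt_sign p))).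
  replace (Rabs (IZR (qt_sign p)) * theta_bound ^ 4 * _) with
    (Rabs (IZR (qt_sign p)) * (theta_bound * exp (- Rabs (IZR a))) * (theta_bound * exp (- Rabs (IZR b)))
     * (theta_bound * exp (- Rabs (IZR c))) * (theta_bound * exp (- Rabs (IZR d)))) by ring.
  assert (Hnn : forall x, 0 <= Cmod x) by apply Cmod_ge_0.
  repeat apply Rmult_le_compat; auto using Rmult_le_pos, Rle_refl.
Qed.

Lemma lattice_sum_is_lim data :
  is_lim_Cseq (fun M => csum (zbox M) (lattice_term zeta tau data)) (csum data (qt_value zeta tau)).
Proof.
  apply is_lim_Cseq_ext with (fun M => csum data (fun p => qt_coef p
    * (csum (zrange M) (thetaA_term tau (qt_a1 p)) * csum (zrange M) (thetaA_term tau (qt_a2 p))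
       * csum (zrange M) (thetaF_term zeta tau (qt_f1 p))
       * csum (zrange M) (thetaF_term zeta tau (qt_f2 p))))%C).
  - intros M. unfold lattice_term. rewrite csum_comm. apply csum_ext. intros p _.
    rewrite <- csum_zbox_mult, <- csum_mult_l. apply csum_ext. intros [[[a b] c] d] _.
    unfold qt_lattice_term. ring.
  - apply is_lim_Cseq_csum. intros p _. unfold qt_value. rewrite <- !Cmult_assoc.
    apply is_lim_Cseq_mult; [apply is_lim_Cseq_const|]. rewrite !Cmult_assoc.
    repeat apply is_lim_Cseq_mult; apply (Zsum_is_lim _ theta_bound);
      auto using Cmod_thetaA_term_le, Cmod_thetaF_term_le.
Qed.

Lemma Cmod_lattice_term_outside_le data M a b c d :
  in_cube M (change_vars (a, b, c, d)) = false ->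
  Cmod (lattice_term zeta tau data (a, b, c, d)) <=
    rsum data (fun p => Rabs (IZR (qt_sign p))) * theta_bound ^ 4 * decay_ratio ^ M
    * (half_decay a * half_decay b * half_decay c * half_decay d).
Proof.
  intros Hout. apply not_in_cube_change_vars in Hout.
  set (s := Rabs (IZR a) + Rabs (IZR b) + Rabs (IZR c) + Rabs (IZR d)) in *.
  (* half of the decay pays for the truncation, the other half keeps the sum over the box bounded *)
  assert (Hs : exp (- s) <= decay_ratio ^ M
                 * (half_decay a * half_decay b * half_decay c * half_decay d)).
  { unfold half_decay. rewrite <- exp_half_INR, <- !exp_plus. apply exp_le_exp. unfold s in *. lra. }
  unfold lattice_term. eapply Rle_trans; [apply Cmod_csum|].
  rewrite <- !rsum_mult_r. apply rsum_le. intros p _.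
  eapply Rle_trans; [apply Cmod_qt_lattice_term_le|]. fold s.
  replace (_ * _ * decay_ratio ^ M * _) with (Rabs (IZR (qt_sign p)) * theta_bound ^ 4
    * (decay_ratio ^ M * (half_decay a * half_decay b * half_decay c * half_decay d))) by ring.
  apply Rmult_le_compat_l; [|exact Hs].
  apply Rmult_le_pos; [apply Rabs_pos|apply pow_le, theta_bound_nonneg].
Qed.

Lemma lattice_tail_is_lim data :
  is_lim_Cseq (fun M => csum (filter (fun n => negb (in_cube M (change_vars n))) (zbox M))
                         (lattice_term zeta tau data)) 0%C.
Proof.
  set (C0 := rsum data (fun p => Rabs (IZR (qt_sign p))) * theta_bound ^ 4).
  set (W := fun n : Z4 => let '(a, b, c, d) := n in
              half_decay a * half_decay b * half_decay c * half_decay d).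
  assert (HC0 : 0 <= C0).
  { apply Rmult_le_pos; [apply rsum_nonneg; intros; apply Rabs_pos|apply pow_le, theta_bound_nonneg]. }
  assert (HW : forall n, 0 <= W n).
  { intros [[[a b] c] d]. unfold W, half_decay. repeat apply Rmult_le_pos; apply Rlt_le, exp_pos. }
  pose proof decay_ratio_bounds as Hq.
  apply is_lim_Cseq_squeeze with (fun M => C0 * (2 / (1 - decay_ratio)) ^ 4 * decay_ratio ^ M).
  - intros M. eapply Rle_trans; [apply Cmod_csum|].
    apply Rle_trans with (rsum (zbox M) (fun n => C0 * decay_ratio ^ M * W n)).
    { eapply Rle_trans; [|apply rsum_filter_le; intros n _; apply Rmult_le_pos; auto;
        apply Rmult_le_pos; [exact HC0|apply pow_le; lra]].
      apply rsum_le. intros [[[a b] c] d] Hn. apply filter_In, proj2, Bool.negb_true_iff in Hn.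
      now apply Cmod_lattice_term_outside_le. }
    rewrite rsum_mult_l. unfold W. rewrite rsum_zbox_mult.
    replace (C0 * (2 / (1 - decay_ratio)) ^ 4 * decay_ratio ^ M)
      with (C0 * decay_ratio ^ M * (2 / (1 - decay_ratio)) ^ 4) by ring.
    apply Rmult_le_compat_l; [apply Rmult_le_pos; [exact HC0|apply pow_le; lra]|].
    pose proof (rsum_zrange_half_decay_le M).
    assert (0 <= rsum (zrange M) half_decay)
      by (apply rsum_nonneg; intros; apply Rlt_le, exp_pos).
    replace (rsum (zrange M) half_decay * rsum (zrange M) half_decay * rsum (zrange M) half_decay
      * rsum (zrange M) half_decay) with (rsum (zrange M) half_decay ^ 4) by ring.
    now apply pow_incr.
  - replace (Finite 0) with (Rbar_mult (C0 * (2 / (1 - decay_ratio)) ^ 4) 0)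
      by (simpl; f_equal; ring).
    apply is_lim_seq_scal_l, is_lim_seq_geom. rewrite Rabs_right; lra.
Qed.

End Estimates.

Theorem quartic_identity zeta tau kap data : 0 < Im tau ->
  forallb (qt_valid kap) data = true -> orbit_check kap data = true ->
  csum data (qt_value zeta tau) = 0%C.
Proof.
  intros Htau Hvalid Hcheck. rewrite forallb_forall in Hvalid.
  apply (is_lim_Cseq_unique _ _ _ (lattice_sum_is_lim zeta tau Htau data)).
  eapply is_lim_Cseq_ext; [|apply (lattice_tail_is_lim zeta tau Htau data)].
  intros M.
  rewrite (csum_filter (fun n => in_cube M (change_vars n)) (zbox M)).
  rewrite (csum_ext (filter (fun n => in_cube M (change_vars n)) _) _
             (fun n => image_term zeta tau kap data (change_vars n)))
    by (intros n _; now apply lattice_term_change_vars).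
  rewrite csum_zbox_change_vars by (intros x Hx; unfold image_term; now rewrite Hx).
  rewrite csum_cube_image_term by exact Hcheck. ring.
Qed.

Definition identity1 := [QT 1 0 3 3 1 9; QT (-1) 0 1 1 3 7; QT 1 0 1 3 5 5].
Definition identity2 := [QT 1 4 1 1 3 9; QT (-1) 4 3 3 5 7; QT 1 0 1 3 1 1].
Definition identity3 := [QT 1 0 3 3 1 3; QT 1 4 1 1 5 9; QT (-1) 4 1 3 7 7].
Definition identity4 := [QT 1 0 1 1 1 5; QT 1 4 3 3 7 9; QT (-1) 0 1 3 3 3].
Definition identity5 := [QT 1 0 1 1 1 7; QT (-1) 0 3 3 3 5; QT 1 4 1 3 9 9].

Lemma orbit_check1 : orbit_check 0 identity1 = true. Proof. vm_compute. reflexivity. Qed.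
Lemma orbit_check2 : orbit_check 2 identity2 = true. Proof. vm_compute. reflexivity. Qed.
Lemma orbit_check3 : orbit_check 4 identity3 = true. Proof. vm_compute. reflexivity. Qed.
Lemma orbit_check4 : orbit_check 6 identity4 = true. Proof. vm_compute. reflexivity. Qed.
Lemma orbit_check5 : orbit_check 8 identity5 = true. Proof. vm_compute. reflexivity. Qed.

Lemma root10_4 : root10 4 = (zeta5 * zeta5)%C.
Proof.
  unfold zeta5, root10, e2pi. rewrite <- cexp_add. f_equal.
  apply injective_projections; simpl; field.
Qed.

Theorem proposition6p3 :
  forall (zeta tau : C), 0 < Im tau ->
  let A := theta_const 1 (1/5) tau in
  let B := theta_const 1 (3/5) tau in
  let f := fun k : R => theta (1/5) (k/5) zeta tau in
  let z2 := Cmult zeta5 zeta5 in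
  (B*B*f 1*f 9 - A*A*f 3*f 7 + A*B*f 5*f 5 = 0)%C /\
  (z2*A*A*f 3*f 9 - z2*B*B*f 5*f 7 + A*B*f 1*f 1 = 0)%C /\
  (B*B*f 1*f 3 + z2*A*A*f 5*f 9 - z2*A*B*f 7*f 7 = 0)%C /\
  (A*A*f 1*f 5 + z2*B*B*f 7*f 9 - A*B*f 3*f 3 = 0)%C /\
  (A*A*f 1*f 7 - B*B*f 3*f 5 + z2*A*B*f 9*f 9 = 0)%C.
Proof.
  intros zeta tau Htau A B f z2.
  pose proof (quartic_identity zeta tau 0 identity1 Htau eq_refl orbit_check1) as H1.
  pose proof (quartic_identity zeta tau 2 identity2 Htau eq_refl orbit_check2) as H2.
  pose proof (quartic_identity zeta tau 4 identity3 Htau eq_refl orbit_check3) as H3.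
  pose proof (quartic_identity zeta tau 6 identity4 Htau eq_refl orbit_check4) as H4.
  pose proof (quartic_identity zeta tau 8 identity5 Htau eq_refl orbit_check5) as H5.
  unfold identity1, identity2, identity3, identity4, identity5, qt_value, qt_coef in *.
  cbn [csum qt_sign qt_root qt_a1 qt_a2 qt_f1 qt_f2] in *.
  rewrite root10_0 in H1, H2, H3, H4, H5. rewrite root10_4 in H2, H3, H4, H5.
  fold z2 in H2, H3, H4, H5.
  change (thetaA tau 1) with A in *. change (thetaA tau 3) with B in *.
  change (thetaF zeta tau ?k) with (f (IZR k)) in *.
  repeat split; [rewrite <- H1|rewrite <- H2|rewrite <- H3|rewrite <- H4|rewrite <- H5]; ring.
Qed.
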